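(* The edge set of the complete graph $K_9$ cannot be partitioned into three subgraphs each isomorphic to $P_3 \square P_3$.
   Context: $P_n$ denotes the path graph on $n$ vertices and $K_m$ the complete graph on $m$ vertices. For graphs $G=(V,E)$ and $G'=(V',E')$, the Cartesian product $G \square G'$ has vertex set $V\times V'$, with $\{(v,v'),(w,w')\}$ an edge iff either $\{v,w\}\in E$ and $v'=w'$, or $v=w$ and $\{v',w'\}\in E'$. Thus $P_3\square P_3$ is the $3\times 3$ grid graph with 9 vertices and 12 edges. *)

From mathcomp Require Import all_boot.
Set Implicit Arguments. Unset Strict Implicit. Unset Printing Implicit Defensive.

Definition gridV := ('I_3 * 'I_3)%type.

Definition path3_adj (i j : 'I_3) : bool := (i.+1 == j :> nat) || (j.+1 == i :> nat).

Definition grid_adj (u v : gridV) : bool :=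
  (path3_adj u.1 v.1 && (u.2 == v.2)) || ((u.1 == v.1) && path3_adj u.2 v.2).

Definition K9_edges : {set {set 'I_9}} := [set e : {set 'I_9} | #|e| == 2].

Definition is_grid_copy (E : {set {set 'I_9}}) : Prop :=
  exists f : gridV -> 'I_9, injective f /\
    E = [set [set f p.1; f p.2] | p in [set p : gridV * gridV | grid_adj p.1 p.2]].

(** In P_3 [] P_3 the corners have degree 2, the side midpoints degree 3 and
    the centre degree 4, and every edge has a side midpoint as an endpoint.
    If three copies partitioned the edges of K_9, the degrees of each vertex
    in the three copies would add up to 8, so the centre of one copy has
    degree 2 in the two others.  The centres c1 of the first and c2 of the
    second copy are then distinct, and the copy containing the edge c1 c2
    would give one of them degree 3 there, although neither c1 nor c2 ever
    has degree 3. *)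

From mathcomp Require Import all_boot zify.

Set Implicit Arguments. Unset Strict Implicit. Unset Printing Implicit Defensive.

Section Neighbourhoods.

Variable T : finType.

Lemma eq_set2 (u v p1 p2 : T) :
  [set u; v] = [set p1; p2] -> (u, v) = (p1, p2) \/ (u, v) = (p2, p1).
Proof.
move=> eq_uv.
have p1_uv : p1 \in [set u; v] by rewrite eq_uv set21.
have p2_uv : p2 \in [set u; v] by rewrite eq_uv set22.
have u_p : u \in [set p1; p2] by rewrite -eq_uv set21.
have v_p : v \in [set p1; p2] by rewrite -eq_uv set22.
case/set2P: u_p p1_uv p2_uv => ->; case/set2P: v_p => ->; rewrite !inE ?orbb.
- by move=> _ /eqP->; left.
- by left.
- by right.
- by move=> /eqP-> _; left.
Qed.

Definition nbhd (E : {set {set T}}) (x : T) : {set T} := [set y | [set x; y] \in E].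

Lemma nbhdU (E F : {set {set T}}) x : nbhd (E :|: F) x = nbhd E x :|: nbhd F x.
Proof. by apply/setP => y; rewrite !inE. Qed.

Lemma disjoint_nbhd (E F : {set {set T}}) x :
  [disjoint E & F] -> [disjoint nbhd E x & nbhd F x].
Proof.
move=> dEF; rewrite -setI_eq0; apply/eqP/setP => y; rewrite !inE.
by apply/negbTE/andP => -[inE inF]; rewrite (disjointFr dEF inE) in inF.
Qed.

Lemma nbhd_complete x : nbhd [set e : {set T} | #|e| == 2] x = [set~ x].
Proof. by apply/setP => y; rewrite !inE cards2 (eq_sym y); case: (x != y). Qed.

Lemma card_nbhd_partition3 (E1 E2 E3 : {set {set T}}) x :
  [disjoint E1 & E2] -> [disjoint E1 & E3] -> [disjoint E2 & E3] ->
  E1 :|: E2 :|: E3 = [set e : {set T} | #|e| == 2] ->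
  #|nbhd E1 x| + #|nbhd E2 x| + #|nbhd E3 x| = #|T|.-1.
Proof.
move=> d12 d13 d23 cover.
rewrite -(cardsC1 x) -nbhd_complete -cover !nbhdU !cardsU setIUl.
by rewrite !disjoint_setI0 ?disjoint_nbhd // setU0 cards0 !subn0.
Qed.

End Neighbourhoods.

Section GraphCopies.

Variables (U T : finType) (adj : rel U).
Hypothesis adj_sym : symmetric adj.
Variable f : U -> T.
Hypothesis f_inj : injective f.

Definition copy_edges : {set {set T}} :=
  [set [set f p.1; f p.2] | p in [set p : U * U | adj p.1 p.2]].

Lemma mem_copy_edges u v : ([set f u; f v] \in copy_edges) = adj u v.
Proof.
apply/imsetP/idP => [[[p1 p2]]|adj_uv]; last by exists (u, v); rewrite ?inE.
rewrite inE /= => adj_p /eq_set2[] [/f_inj-> /f_inj->] //.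
by rewrite adj_sym.
Qed.

Lemma nbhd_copy_edges u : nbhd copy_edges (f u) = f @: [set v | adj u v].
Proof.
apply/setP => y; apply/idP/imsetP => [|[v]]; last first.
  by rewrite inE => + ->; rewrite inE mem_copy_edges.
rewrite inE => /[dup] y_edge /imsetP[p _ eq_p].
have /set2P[eq_y|eq_y] : y \in [set f p.1; f p.2] by rewrite -eq_p set22.
- by exists p.1; rewrite // inE -mem_copy_edges -eq_y.
- by exists p.2; rewrite // inE -mem_copy_edges -eq_y.
Qed.

Lemma card_nbhd_copy_edges u : #|nbhd copy_edges (f u)| = #|adj u|.
Proof. by rewrite nbhd_copy_edges card_imset // cardsE. Qed.

End GraphCopies.

Definition grid_center : gridV := (@Ordinal 3 1 isT, @Ordinal 3 1 isT).

Lemma grid_adj_sym : symmetric grid_adj.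
Proof.
move=> [a b] [c d]; rewrite /grid_adj /path3_adj /= (eq_sym c) (eq_sym d).
by rewrite [(c.+1 == _) || _]orbC [(d.+1 == _) || _]orbC.
Qed.

Lemma enum_gridV : enum {: gridV} = [seq (i, j) | i <- enum 'I_3, j <- enum 'I_3].
Proof. by rewrite enumT unlock. Qed.

Lemma card_grid_adj u : #|grid_adj u| = 2 + (u.1 == 1 :> nat) + (u.2 == 1 :> nat).
Proof.
rewrite cardE /enum_mem -enumT enum_gridV !enum_ordSl enum_ord0.
by case: u => [[[|[|[|?]]] ?] [[|[|[|?]]] ?]].
Qed.

Lemma grid_adj_card3 u v :
  grid_adj u v -> (#|grid_adj u| == 3) || (#|grid_adj v| == 3).
Proof.
rewrite !card_grid_adj.
by case: u v => [[[|[|[|?]]] ?] [[|[|[|?]]] ?]] [[[|[|[|?]]] ?] [[|[|[|?]]] ?]].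
Qed.

Lemma grid_vertex_onto (f : gridV -> 'I_9) : injective f -> forall x, x \in codom f.
Proof.
have card_I9 : #|'I_9| <= #|{: 'I_3 * 'I_3}| by rewrite card_prod !card_ord.
by move=> f_inj; apply: inj_card_onto.
Qed.

Lemma grid_copyP E :
  is_grid_copy E -> exists2 f : gridV -> 'I_9, injective f & E = copy_edges grid_adj f.
Proof. by case=> f [f_inj E_f]; exists f. Qed.

Section GridCopy.

Variable E : {set {set 'I_9}}.
Hypothesis E_grid : is_grid_copy E.

Lemma grid_copy_deg_ge2 x : 1 < #|nbhd E x|.
Proof.
have [f f_inj ->] := grid_copyP E_grid.
have /codomP[u ->] := grid_vertex_onto f_inj x.
by rewrite (card_nbhd_copy_edges grid_adj_sym f_inj) card_grid_adj -addnA leq_addr.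
Qed.

Lemma grid_copy_center : exists c, #|nbhd E c| = 4.
Proof.
have [f f_inj ->] := grid_copyP E_grid.
exists (f grid_center).
by rewrite (card_nbhd_copy_edges grid_adj_sym f_inj) card_grid_adj.
Qed.

Lemma grid_copy_edge_deg3 x y :
  [set x; y] \in E -> (#|nbhd E x| == 3) || (#|nbhd E y| == 3).
Proof.
have [f f_inj ->] := grid_copyP E_grid.
have /codomP[u ->] := grid_vertex_onto f_inj x.
have /codomP[v ->] := grid_vertex_onto f_inj y.
rewrite (mem_copy_edges grid_adj_sym f_inj) !(card_nbhd_copy_edges grid_adj_sym f_inj).
exact: grid_adj_card3.
Qed.

End GridCopy.

Theorem theorem3 :
  ~ (exists E1 E2 E3 : {set {set 'I_9}},
        [/\ is_grid_copy E1, is_grid_copy E2, is_grid_copy E3,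
            [/\ [disjoint E1 & E2], [disjoint E1 & E3] & [disjoint E2 & E3]] &
            E1 :|: E2 :|: E3 = K9_edges]).
Proof.
move=> [E1 [E2 [E3 [grid1 grid2 grid3 [d12 d13 d23] cover]]]].
have deg_sum x : #|nbhd E1 x| + #|nbhd E2 x| + #|nbhd E3 x| = 8.
  by rewrite (card_nbhd_partition3 x d12 d13 d23 cover) card_ord.
have [c1 deg1_c1] := grid_copy_center grid1.
have [c2 deg2_c2] := grid_copy_center grid2.
have [deg2_c1 deg3_c1] : #|nbhd E2 c1| = 2 /\ #|nbhd E3 c1| = 2.
  have := deg_sum c1; have := grid_copy_deg_ge2 grid2 c1.
  by have := grid_copy_deg_ge2 grid3 c1; lia.
have [deg1_c2 deg3_c2] : #|nbhd E1 c2| = 2 /\ #|nbhd E3 c2| = 2.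
  have := deg_sum c2; have := grid_copy_deg_ge2 grid1 c2.
  by have := grid_copy_deg_ge2 grid3 c2; lia.
have c1_neq_c2 : c1 != c2 by apply/eqP => c1_c2; rewrite c1_c2 deg1_c2 in deg1_c1.
have : [set c1; c2] \in K9_edges by rewrite inE cards2 c1_neq_c2.
rewrite -cover !inE => /orP[/orP[]|].
- by move/(grid_copy_edge_deg3 grid1); rewrite deg1_c1 deg1_c2.
- by move/(grid_copy_edge_deg3 grid2); rewrite deg2_c1 deg2_c2.
- by move/(grid_copy_edge_deg3 grid3); rewrite deg3_c1 deg3_c2.
Qed.
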